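(* Let $k\geq2$ and let $L=(l_1,\dots,l_k)$ be positive real numbers with $l_1+\dots+l_k=1$ such that $p_1l_1+\dots+p_kl_k\neq0$ for every $p\in\mathbb{Z}^k\setminus\{0\}$. Then every connected component $Tonn^{\infty,k}(L)$ of the full irrational tonnetz $F\text{-}Tonn^{\infty,k}(L)$ is isomorphic as a simplicial complex to the Delone triangulation $\mathcal{D}_\Lambda$ associated with the permutohedral lattice $\Lambda\cong\mathbb{A}^\ast_{k-1}$.
   Context: $C=\mathbb{R}/\mathbb{Z}$ is the circle with its group structure. A finite subset of $C$ is $L$-admissible if it is a subset of some $\Delta(x;\sigma)=\{x,\,x+l_{\sigma(1)},\,x+l_{\sigma(1)}+l_{\sigma(2)},\dots,x+l_{\sigma(1)}+\dots+l_{\sigma(k-1)}\}$ with $x\in C$, $\sigma\in S_k$. The full irrational tonnetz $F\text{-}Tonn^{\infty,k}(L)$ is the $(k-1)$-dimensional simplicial complex (vertex set $C$) of all $L$-admissible subsets; $Tonn^{\infty,k}(L)$ denotes any of its connected components. $\Lambda=\{x\in\mathbb{Z}^k:\sum x_i=0,\text{ all }x_i\text{ congruent mod }k\}$, $a_i=ke_i-(1,\dots,1)$, $a_I=\sum_{i\in I}a_i$. $\mathcal{D}_\Lambda$ is the simplicial complex with vertex set $\Lambda$ whose simplices are the sets $\{z+a_{I_1},\dots,z+a_{I_s}\}$ with $z\in\Lambda$ and $I_1\subsetneq\dots\subsetneq I_s\subsetneq[k]$. *)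

From Stdlib Require Import Reals ZArith List Permutation Relations.
Import ListNotations.
Open Scope R_scope.

(** * The circle C = R/Z: points are represented by reals, up to [eqC]. *)
Definition eqC (x y : R) : Prop := exists n : Z, x - y = IZR n.

(** Partial sum l_{σ(1)} + ... + l_{σ(m)} ; [l] is the list (l_1,...,l_k),
    [sigma] a list listing a permutation of the indices 0..k-1. *)
Definition psum (l : list R) (sigma : list nat) (m : nat) : R :=
  fold_right Rplus 0 (map (fun i => nth i l 0) (firstn m sigma)).

Definition inDelta (l : list R) (x : R) (sigma : list nat) (y : R) : Prop :=
  exists m : nat, (m < length l)%nat /\ eqC y (x + psum l sigma m).

Definition admissible (l : list R) (S : list R) : Prop :=
  exists (x : R) (sigma : list nat),
    Permutation (seq 0 (length l)) sigma /\
    forall y, In y S -> inDelta l x sigma y.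

Definition tedge (l : list R) (u v : R) : Prop := admissible l [u; v].
Definition in_component (l : list R) (x0 y : R) : Prop :=
  clos_refl_trans R (tedge l) x0 y.

Definition inLambda (k : nat) (x : list Z) : Prop :=
  length x = k /\ fold_right Z.add 0%Z x = 0%Z /\
  forall i j, (i < k)%nat -> (j < k)%nat ->
    Z.divide (Z.of_nat k) (nth i x 0%Z - nth j x 0%Z)%Z.

Definition vadd (x y : list Z) : list Z :=
  map (fun p => (fst p + snd p)%Z) (combine x y).

(** Subsets I of [k] as boolean lists of length k; a_I = sum_{i in I} (k e_i - 1). *)
Definition card_b (I : list bool) : Z := Z.of_nat (count_occ Bool.bool_dec I true).
Definition aI (k : nat) (I : list bool) : list Z :=
  map (fun b : bool => ((if b then Z.of_nat k else 0) - card_b I)%Z) I.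

Definition subb (I J : list bool) : Prop :=
  Forall2 (fun a b => a = true -> b = true) I J.
Definition psub (I J : list bool) : Prop := subb I J /\ I <> J.

Fixpoint chain_ok (k : nat) (c : list (list bool)) : Prop :=
  match c with
  | nil => True
  | A :: nil => length A = k /\ psub A (repeat true k)
  | A :: ((B :: _) as r) => length A = k /\ psub A B /\ chain_ok k r
  end.

Definition Dsimplex (k : nat) (T : list (list Z)) : Prop :=
  exists (z : list Z) (c : list (list bool)),
    inLambda k z /\ chain_ok k c /\
    forall v, In v T <-> exists I, In I c /\ v = vadd z (aI k I).

Definition tonnetz_component_iso_Delone (k : nat) (l : list R) (x0 : R) : Prop :=
  exists f : R -> list Z,
    (forall y y', eqC y y' -> f y = f y') /\
    (forall y, in_component l x0 y -> inLambda k (f y)) /\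
    (forall y y', in_component l x0 y -> in_component l x0 y' ->
        f y = f y' -> eqC y y') /\
    (forall z, inLambda k z -> exists y, in_component l x0 y /\ f y = z) /\
    (forall S : list R, (forall y, In y S -> in_component l x0 y) ->
        (admissible l S <-> Dsimplex k (map f S))).

From Stdlib Require Import Reals ZArith List Permutation Relations.
From Stdlib Require Import Lia Lra ClassicalEpsilon.
Import ListNotations.
Open Scope R_scope.

(* Every [l_j] and [-l_j] is an edge (a rotation of the identity permutation
   starts with [l_j]), and every edge is a difference of two partial sums, so the
   component of [x0] is the set of points [x0 + sum n_i l_i] (mod 1), n in Z^k.
   Since [sum l_i = 1] and L is irrational, such a point determines [n] exactly up
   to adding a constant vector, so [n |-> k n - (sum n_i)(1, ..., 1)] is a
   bijection from the component onto Lambda.  It maps the vertex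
   [x + l_{s(1)} + ... + l_{s(m)}] of [Delta(x; s)] to (image of x) + [a_{s{1..m}}],
   so subsets of simplices [Delta(x; s)] go to subsets of the chains of prefix
   sets of [s]; conversely every chain [I_1 < ... < I_r < [k]] consists of prefix
   sets of some permutation. *)

Fixpoint rsum (g : nat -> R) (n : nat) : R :=
  match n with O => 0 | S n => rsum g n + g n end.
Fixpoint zsum (g : nat -> Z) (n : nat) : Z :=
  match n with O => 0%Z | S n => (zsum g n + g n)%Z end.

Lemma rsum_ext g h n : (forall i, (i < n)%nat -> g i = h i) -> rsum g n = rsum h n.
Proof. induction n; simpl; intros H; auto. rewrite IHn by (intros; apply H; lia). rewrite H by lia; auto. Qed.

Lemma zsum_ext g h n : (forall i, (i < n)%nat -> g i = h i) -> zsum g n = zsum h n.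
Proof. induction n; simpl; intros H; auto. rewrite IHn by (intros; apply H; lia). rewrite H by lia; auto. Qed.

Lemma rsum_plus g h n : rsum (fun i => g i + h i) n = rsum g n + rsum h n.
Proof. induction n; simpl; [lra|]. rewrite IHn; lra. Qed.

Lemma rsum_scal c g n : rsum (fun i => c * g i) n = c * rsum g n.
Proof. induction n; simpl; [lra|]. rewrite IHn; lra. Qed.

Lemma rsum_0 n : rsum (fun _ => 0) n = 0.
Proof. induction n; simpl; [lra|]. rewrite IHn; lra. Qed.

Lemma rsum_delta g a n : (a < n)%nat ->
  rsum (fun i => if Nat.eq_dec i a then g i else 0) n = g a.
Proof.
  induction n; intros H; [lia|]. simpl.
  destruct (Nat.eq_dec n a) as [->|ne]; [|rewrite IHn by lia; lra].
  rewrite (rsum_ext _ (fun _ => 0)), rsum_0; [lra|].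
  intros i Hi; destruct (Nat.eq_dec i a); [lia|auto].
Qed.

Lemma zsum_plus g h n : zsum (fun i => (g i + h i)%Z) n = (zsum g n + zsum h n)%Z.
Proof. induction n; simpl; [lia|]. rewrite IHn; lia. Qed.

Lemma zsum_scal c g n : zsum (fun i => (c * g i)%Z) n = (c * zsum g n)%Z.
Proof. induction n; simpl; [lia|]. rewrite IHn; ring. Qed.

Lemma zsum_const c n : zsum (fun _ => c) n = (Z.of_nat n * c)%Z.
Proof. induction n; [simpl; lia|]. cbn [zsum]. rewrite IHn, Nat2Z.inj_succ; ring. Qed.

Lemma fold_right_Rplus_map_seq g n : fold_right Rplus 0 (map g (seq 0 n)) = rsum g n.
Proof.
  assert (acc : forall xs a, fold_right Rplus a xs = fold_right Rplus 0 xs + a)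
    by (induction xs; simpl; intros; [lra|]; rewrite IHxs; lra).
  induction n; auto. rewrite seq_S, map_app, fold_right_app. simpl.
  rewrite acc, IHn; lra.
Qed.

Lemma fold_right_Zadd_map_seq g n : fold_right Z.add 0%Z (map g (seq 0 n)) = zsum g n.
Proof.
  assert (acc : forall xs a, fold_right Z.add a xs = (fold_right Z.add 0 xs + a)%Z)
    by (induction xs; simpl; intros; [lia|]; rewrite IHxs; lia).
  induction n; auto. rewrite seq_S, map_app, fold_right_app. simpl.
  rewrite acc, IHn; lia.
Qed.

Lemma count_occ_true_map_seq (g : nat -> bool) n :
  Z.of_nat (count_occ Bool.bool_dec (map g (seq 0 n)) true) =
  zsum (fun i => if g i then 1%Z else 0%Z) n.
Proof.
  induction n; auto. rewrite seq_S, map_app, count_occ_app. simpl.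
  rewrite Nat2Z.inj_add, IHn. destruct (g n); simpl; lia.
Qed.

Lemma nth_map_seq {A} (g : nat -> A) n i d : (i < n)%nat -> nth i (map g (seq 0 n)) d = g i.
Proof.
  intros H. rewrite (nth_indep _ d (g 0%nat)) by (rewrite length_map, length_seq; lia).
  rewrite map_nth, seq_nth by lia. auto.
Qed.

Lemma map_nth_seq_length {A} (s : list A) d : map (fun i => nth i s d) (seq 0 (length s)) = s.
Proof.
  apply nth_ext with d d; [rewrite length_map, length_seq; auto|].
  intros i Hi. rewrite nth_map_seq; rewrite length_map, length_seq in Hi; auto.
Qed.

Lemma combine_map {A B C} (f : C -> A) (g : C -> B) s :
  combine (map f s) (map g s) = map (fun x => (f x, g x)) s.
Proof. induction s; simpl; auto. rewrite IHs; auto. Qed.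

Lemma in_firstn {A} (x : A) m s : In x (firstn m s) -> In x s.
Proof. intros H. rewrite <- (firstn_skipn m s). apply in_or_app; auto. Qed.

Lemma NoDup_app_disjoint {A} (s1 s2 : list A) a : NoDup (s1 ++ s2) -> In a s1 -> ~ In a s2.
Proof.
  induction s1 as [|b s1 IH]; simpl; intros H H1 H2; [auto|]. inversion H as [|b' s' Hb Hnd]; subst.
  destruct H1 as [->|H1]; [apply Hb; apply in_or_app; auto| eapply IH; eauto].
Qed.

Lemma Permutation_seq_iff k (sigma : list nat) : Permutation (seq 0 k) sigma ->
  NoDup sigma /\ (forall x, In x sigma <-> (x < k)%nat) /\ length sigma = k.
Proof.
  intros P. split; [|split].
  - eapply Permutation_NoDup; eauto. apply seq_NoDup.
  - intros x. rewrite <- (Permutation_in' (eq_refl x) P), in_seq. lia.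
  - rewrite <- (Permutation_length P), length_seq; auto.
Qed.

Lemma eqC_refl x : eqC x x.
Proof. exists 0%Z. simpl; lra. Qed.

Lemma eqC_sym x y : eqC x y -> eqC y x.
Proof. intros [n H]. exists (- n)%Z. rewrite opp_IZR; lra. Qed.

Lemma eqC_trans x y z : eqC x y -> eqC y z -> eqC x z.
Proof. intros [n H] [m H']. exists (n + m)%Z. rewrite plus_IZR; lra. Qed.

Section Lattice.
Variable k : nat.

Definition lattice_point (n : nat -> Z) : list Z :=
  map (fun i => (Z.of_nat k * n i - zsum n k)%Z) (seq 0 k).

Lemma length_lattice_point n : length (lattice_point n) = k.
Proof. unfold lattice_point; rewrite length_map, length_seq; auto. Qed.

Lemma nth_lattice_point n i : (i < k)%nat ->
  nth i (lattice_point n) 0%Z = (Z.of_nat k * n i - zsum n k)%Z.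
Proof. intros; unfold lattice_point; rewrite nth_map_seq; auto. Qed.

Lemma lattice_point_shift n m d : (forall i, (i < k)%nat -> n i = (m i + d)%Z) ->
  lattice_point n = lattice_point m.
Proof.
  intros H. assert (Hz : zsum n k = (zsum m k + Z.of_nat k * d)%Z).
  { rewrite (zsum_ext _ (fun i => (m i + d)%Z)), zsum_plus, zsum_const by auto; auto. }
  unfold lattice_point. apply map_ext_in. intros i Hi. apply in_seq in Hi. rewrite H, Hz by lia. ring.
Qed.

Lemma lattice_point_Lambda n : inLambda k (lattice_point n).
Proof.
  split; [apply length_lattice_point|split].
  - unfold lattice_point. rewrite fold_right_Zadd_map_seq.
    rewrite (zsum_ext _ (fun i => (Z.of_nat k * n i + (- zsum n k))%Z)) by (intros; ring).
    rewrite zsum_plus, zsum_scal, zsum_const. ring.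
  - intros i j Hi Hj. rewrite !nth_lattice_point by auto. exists (n i - n j)%Z. ring.
Qed.

Definition memb (s : list nat) (i : nat) : bool := if in_dec Nat.eq_dec i s then true else false.
Definition memz (s : list nat) (i : nat) : Z := if memb s i then 1%Z else 0%Z.
Definition bits (s : list nat) : list bool := map (memb s) (seq 0 k).

Lemma length_bits s : length (bits s) = k.
Proof. unfold bits; rewrite length_map, length_seq; auto. Qed.

Lemma nth_bits s i : (i < k)%nat -> nth i (bits s) false = memb s i.
Proof. intros; unfold bits; apply nth_map_seq; auto. Qed.

Lemma card_bits s : card_b (bits s) = zsum (memz s) k.
Proof.
  apply count_occ_true_map_seq.
Qed.

Lemma nth_vadd x y i : length x = length y -> (i < length x)%nat ->
  nth i (vadd x y) 0%Z = (nth i x 0 + nth i y 0)%Z.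
Proof.
  intros Hl Hi. unfold vadd.
  pose proof (map_nth (fun p : Z * Z => (fst p + snd p)%Z) (combine x y) (0%Z, 0%Z) i) as E.
  simpl in E. rewrite E, combine_nth; auto.
Qed.

Lemma nth_aI B i : (i < length B)%nat ->
  nth i (aI k B) 0%Z = ((if nth i B false then Z.of_nat k else 0) - card_b B)%Z.
Proof.
  intros Hi. unfold aI.
  rewrite (nth_indep _ 0%Z ((- card_b B)%Z)) by (rewrite length_map; lia).
  pose proof (map_nth (fun b : bool => ((if b then Z.of_nat k else 0) - card_b B)%Z) B false i) as E.
  simpl in E. rewrite E; auto.
Qed.

Lemma lattice_point_add_memz n s :
  lattice_point (fun i => (n i + memz s i)%Z) = vadd (lattice_point n) (aI k (bits s)).
Proof.
  assert (Ha : length (aI k (bits s)) = k) by (unfold aI; rewrite length_map, length_bits; auto).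
  apply nth_ext with 0%Z 0%Z.
  - unfold vadd. rewrite length_map, length_combine, Ha, !length_lattice_point. lia.
  - intros i Hi. rewrite length_lattice_point in Hi.
    rewrite nth_vadd, !nth_lattice_point, nth_aI, card_bits, nth_bits, zsum_plus
      by (rewrite ?length_lattice_point, ?Ha, ?length_bits; auto).
    unfold memz. destruct (memb s i); ring.
Qed.

Hypothesis k_pos : (0 < k)%nat.

Lemma lattice_point_shift_inv n m : lattice_point n = lattice_point m ->
  exists d, forall i, (i < k)%nat -> n i = (m i + d)%Z.
Proof.
  intros H. exists (n 0%nat - m 0%nat)%Z. intros i Hi.
  pose proof (f_equal (nth i) H) as Ei. pose proof (f_equal (nth 0%nat) H) as E0.
  apply (f_equal (fun f => f 0%Z)) in Ei, E0.
  rewrite !nth_lattice_point in Ei, E0 by auto.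
  assert (Z.of_nat k * (n i - m i - (n 0%nat - m 0%nat)) = 0)%Z as E by lia.
  apply Z.mul_eq_0 in E. lia.
Qed.

Lemma lattice_point_onto z : inLambda k z -> exists n, lattice_point n = z.
Proof.
  intros [Hl [Hs Hd]]. set (K := Z.of_nat k).
  assert (HK : K <> 0%Z) by (unfold K; lia).
  exists (fun i => ((nth i z 0 - nth 0 z 0) / K)%Z).
  assert (Hm : forall i, (i < k)%nat -> (K * ((nth i z 0 - nth 0 z 0) / K) = nth i z 0 - nth 0 z 0)%Z).
  { intros i Hi. destruct (Hd i 0%nat Hi k_pos) as [q Hq]. fold K in Hq. rewrite Hq.
    rewrite Z.div_mul by auto. ring. }
  assert (Hz : zsum (fun i => ((nth i z 0 - nth 0 z 0) / K)%Z) k = (- nth 0 z 0)%Z).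
  { apply (Z.mul_reg_l _ _ K); auto. rewrite <- zsum_scal.
    rewrite (zsum_ext _ (fun i => (nth i z 0 + - nth 0 z 0)%Z)) by (intros; rewrite Hm; auto; ring).
    rewrite zsum_plus, zsum_const. rewrite <- (map_nth_seq_length z 0%Z), fold_right_Zadd_map_seq, Hl in Hs.
    rewrite Hs. unfold K. ring. }
  apply nth_ext with 0%Z 0%Z; rewrite length_lattice_point; auto.
  intros i Hi. rewrite nth_lattice_point by auto. fold K. rewrite Hm, Hz by auto. ring.
Qed.

End Lattice.

Section Chains.
Variable k : nat.

Lemma subb_bits s s' : incl s s' -> subb (bits k s) (bits k s').
Proof.
  intros H. unfold bits, subb. induction (seq 0 k); simpl; constructor; auto.
  unfold memb. destruct (in_dec Nat.eq_dec a s); destruct (in_dec Nat.eq_dec a s'); auto.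
Qed.

Lemma psub_bits_firstn sigma m m' : Permutation (seq 0 k) sigma -> (m < m' <= k)%nat ->
  psub (bits k (firstn m sigma)) (bits k (firstn m' sigma)).
Proof.
  intros P Hm. destruct (Permutation_seq_iff k sigma P) as [Hn [Hi Hl]]. split.
  { apply subb_bits. intros i Hin. rewrite <- (firstn_skipn m (firstn m' sigma)), firstn_firstn.
    apply in_or_app; left. replace (Nat.min m m') with m by lia. auto. }
  intros Heq. set (j := nth m sigma 0%nat).
  assert (J1 : In j (firstn m' sigma)).
  { replace j with (nth m (firstn m' sigma) 0%nat).
    - apply nth_In. rewrite length_firstn; lia.
    - rewrite nth_firstn. replace (m <? m')%nat with true by (symmetry; apply Nat.ltb_lt; lia); auto. }
  assert (J2 : ~ In j (firstn m sigma)).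
  { intros Hj. apply (NoDup_app_disjoint (firstn m sigma) (skipn m sigma) j); auto.
    - rewrite firstn_skipn; auto.
    - unfold j. rewrite <- (Nat.add_0_r m) at 1. rewrite <- nth_skipn.
      apply nth_In. rewrite length_skipn; lia. }
  assert (Jk : (j < k)%nat) by (apply Hi; eapply in_firstn; eauto).
  apply (f_equal (fun B => nth j B false)) in Heq.
  rewrite !nth_bits in Heq by auto. unfold memb in Heq.
  destruct (in_dec Nat.eq_dec j (firstn m sigma)); destruct (in_dec Nat.eq_dec j (firstn m' sigma));
    congruence.
Qed.

Lemma bits_firstn_all sigma : Permutation (seq 0 k) sigma -> bits k (firstn k sigma) = repeat true k.
Proof.
  intros P. destruct (Permutation_seq_iff k sigma P) as [_ [Hi Hl]].
  rewrite firstn_all2 by lia. unfold bits.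
  rewrite (map_ext_in _ (fun _ => true)), map_const, length_seq; auto.
  intros i Hin. apply in_seq in Hin. unfold memb.
  destruct (in_dec Nat.eq_dec i sigma) as [|n]; auto. exfalso; apply n, Hi; lia.
Qed.

Lemma chain_ok_prefixes sigma (P : nat -> bool) : Permutation (seq 0 k) sigma ->
  forall r a, (a + r <= k)%nat ->
  chain_ok k (map (fun m => bits k (firstn m sigma)) (filter P (seq a r))).
Proof.
  intros Hs. induction r; intros a Har; [simpl; auto|].
  simpl. destruct (P a); [|apply IHr; lia].
  simpl. pose proof (IHr (S a) ltac:(lia)) as IH.
  assert (Hb : forall b, In b (filter P (seq (S a) r)) -> (a < b /\ b < k)%nat).
  { intros b Hb. apply filter_In in Hb. destruct Hb as [Hb _]. apply in_seq in Hb. lia. }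
  destruct (filter P (seq (S a) r)) as [|b ms] eqn:E.
  - split; [apply length_bits|]. rewrite <- (bits_firstn_all sigma Hs). apply psub_bits_firstn; auto; lia.
  - simpl in IH |- *. split; [apply length_bits|]. split; auto.
    destruct (Hb b (or_introl eq_refl)). apply psub_bits_firstn; auto; lia.
Qed.

(* [chain_order bot c] lists, level by level, the indices entering the chain [c]
   above [bot]; its prefixes then realise the members of [c]. *)
Fixpoint chain_order (bot : list bool) (c : list (list bool)) : list nat :=
  match c with
  | [] => []
  | A :: r => filter (fun i => andb (nth i A false) (negb (nth i bot false))) (seq 0 k)
              ++ chain_order A r
  end.

Fixpoint nested (bot : list bool) (c : list (list bool)) : Prop :=
  match c with
  | [] => True
  | A :: r => (forall i, (i < k)%nat -> nth i bot false = true -> nth i A false = true) /\ nested A r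
  end.

Lemma chain_order_bound : forall c bot, nested bot c -> forall i, In i (chain_order bot c) ->
  (i < k)%nat /\ nth i bot false = false.
Proof.
  induction c as [|A r IH]; intros bot Hw i Hi; simpl in *; [contradiction|]. destruct Hw as [Hs Hw].
  apply in_app_or in Hi. destruct Hi as [Hi|Hi].
  - apply filter_In in Hi. destruct Hi as [Hi Hb]. apply in_seq in Hi.
    apply andb_prop in Hb. destruct Hb as [_ Hb]. split; [lia|]. destruct (nth i bot false); auto.
  - destruct (IH A Hw i Hi) as [Hk HA]. split; auto.
    destruct (nth i bot false) eqn:E; auto. rewrite (Hs i Hk E) in HA. discriminate.
Qed.

Lemma chain_order_NoDup : forall c bot, nested bot c -> NoDup (chain_order bot c).
Proof.
  induction c as [|A r IH]; simpl; intros bot Hw; [constructor|].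
  destruct Hw as [Hs Hw]. apply NoDup_app.
  - apply NoDup_filter, seq_NoDup.
  - apply IH; auto.
  - intros a Ha Hb. apply filter_In in Ha. destruct Ha as [_ Ha]. apply andb_prop in Ha.
    destruct Ha as [Ha _]. destruct (chain_order_bound r A Hw a Hb) as [_ E]. congruence.
Qed.

Lemma chain_order_prefix : forall c bot, nested bot c -> forall A, In A c -> exists m,
  forall i, (i < k)%nat ->
    (nth i A false = true <-> nth i bot false = true \/ In i (firstn m (chain_order bot c))).
Proof.
  induction c as [|A0 r IH]; intros bot Hw A HA; simpl in *; [contradiction|]. destruct Hw as [Hs Hw].
  set (p := filter (fun i => andb (nth i A0 false) (negb (nth i bot false))) (seq 0 k)).
  assert (Hp : forall i, (i < k)%nat -> (In i p <-> nth i A0 false = true /\ nth i bot false = false)).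
  { intros i Hi. unfold p. rewrite filter_In, in_seq, Bool.andb_true_iff, Bool.negb_true_iff.
    split; [intros [_ H]; exact H | intros H; split; [lia | exact H]]. }
  destruct HA as [<-|HA].
  - exists (length p). intros i Hi. rewrite <- (Nat.add_0_r (length p)), firstn_app_2.
    simpl. rewrite app_nil_r, Hp by auto.
    specialize (Hs i Hi). destruct (nth i A0 false); destruct (nth i bot false); intuition.
  - destruct (IH A0 Hw A HA) as [m' Hm']. exists (length p + m')%nat. intros i Hi.
    rewrite firstn_app_2, Hm', in_app_iff, Hp by auto.
    specialize (Hs i Hi). destruct (nth i A0 false); destruct (nth i bot false); intuition.
Qed.

Lemma subb_nth A B : subb A B -> forall i, nth i A false = true -> nth i B false = true.
Proof. induction 1; intros [|i] Hi; simpl in *; auto; discriminate. Qed.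

Lemma nth_repeat_true i : (i < k)%nat -> nth i (repeat true k) false = true.
Proof. intros Hi. rewrite (nth_indep _ false true) by (rewrite repeat_length; auto). apply nth_repeat. Qed.

Lemma chain_ok_nested : forall c, chain_ok k c -> forall bot,
  (forall A, hd_error c = Some A -> forall i, (i < k)%nat ->
     nth i bot false = true -> nth i A false = true) ->
  nested bot (c ++ [repeat true k]).
Proof.
  induction c as [|A r IH]; intros Hc bot Hb; simpl.
  - split; auto. intros; apply nth_repeat_true; auto.
  - split; [apply Hb; auto|].
    destruct r as [|B r'].
    + simpl. split; auto. intros; apply nth_repeat_true; auto.
    + destruct Hc as [_ [[Hs _] Hc]]. apply IH; auto.
      intros A' E i Hi HA. simpl in E. inversion E; subst. eapply subb_nth; eauto.
Qed.

Lemma chain_ok_proper : forall c, chain_ok k c -> forall A, In A c ->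
  length A = k /\ exists i, (i < k)%nat /\ nth i A false = false.
Proof.
  induction c as [|A r IH]; intros Hc A' HA; [contradiction|].
  destruct r as [|B r'].
  - destruct HA as [<-|[]]. destruct Hc as [Hl [_ Hne]]. split; auto.
    destruct (classic (exists i, (i < k)%nat /\ nth i A false = false)) as [H|H]; auto.
    exfalso. apply Hne. apply nth_ext with false false; [rewrite repeat_length; auto|].
    intros n Hn. rewrite nth_repeat_true by lia.
    destruct (nth n A false) eqn:E; auto. exfalso; apply H; exists n; split; auto; lia.
  - destruct Hc as [Hl [[Hs _] Hc]]. destruct HA as [<-|HA]; [|apply IH; auto].
    split; auto. destruct (IH Hc B (or_introl eq_refl)) as [_ [i [Hi HB]]].
    exists i; split; auto. destruct (nth i A false) eqn:E; auto.
    rewrite (subb_nth _ _ Hs i E) in HB; discriminate.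
Qed.

Lemma chain_ok_prefixes_perm c : chain_ok k c -> exists sigma, Permutation (seq 0 k) sigma /\
  forall I, In I c -> exists m, (m < k)%nat /\ I = bits k (firstn m sigma).
Proof.
  intros Hc.
  assert (Hbot : forall i, nth i (repeat false k) false = false) by (intros; apply nth_repeat).
  assert (Hw : nested (repeat false k) (c ++ [repeat true k])).
  { apply chain_ok_nested; auto. intros A _ i _ H. rewrite Hbot in H; discriminate. }
  set (sigma := chain_order (repeat false k) (c ++ [repeat true k])).
  assert (P : Permutation (seq 0 k) sigma).
  { apply NoDup_Permutation; [apply seq_NoDup| apply chain_order_NoDup; auto|].
    intros x. rewrite in_seq. split.
    - intros Hx. destruct (chain_order_prefix _ _ Hw (repeat true k)) as [m Hm].
      { apply in_or_app; simpl; auto. }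
      destruct (proj1 (Hm x ltac:(lia)) (nth_repeat_true x ltac:(lia))) as [H|H].
      + rewrite Hbot in H; discriminate.
      + eapply in_firstn; eauto.
    - intros Hx. destruct (chain_order_bound _ _ Hw x Hx). lia. }
  exists sigma. split; auto.
  intros I HI. destruct (chain_order_prefix _ _ Hw I) as [m Hm]; [apply in_or_app; auto|].
  fold sigma in Hm. destruct (chain_ok_proper c Hc I HI) as [HIl [j [Hj HIj]]].
  destruct (Permutation_seq_iff k sigma P) as [_ [Hi Hl]].
  assert (Hmk : (m < k)%nat).
  { destruct (Nat.lt_ge_cases m k) as [H|H]; auto. exfalso.
    rewrite firstn_all2 in Hm by lia.
    assert (nth j I false = true) by (apply Hm; auto; right; apply Hi; auto). congruence. }
  exists m. split; auto. apply nth_ext with false false; [rewrite length_bits; auto|].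
  intros i Hik. rewrite HIl in Hik. rewrite nth_bits by auto. unfold memb.
  destruct (in_dec Nat.eq_dec i (firstn m sigma)) as [Hin|Hin].
  - apply Hm; auto.
  - destruct (nth i I false) eqn:E; auto. exfalso. apply Hm in E; auto.
    rewrite Hbot in E. destruct E; [discriminate|contradiction].
Qed.

End Chains.

Section Tonnetz.
Variables (k : nat) (l : list R).
Hypothesis Hlen : length l = k.

Definition int_comb (n : nat -> Z) : R := rsum (fun i => IZR (n i) * nth i l 0) k.

Lemma int_comb_ext n m : (forall i, (i < k)%nat -> n i = m i) -> int_comb n = int_comb m.
Proof. intros H; unfold int_comb; apply rsum_ext; intros i Hi; rewrite H; auto. Qed.

Lemma int_comb_plus n m : int_comb (fun i => (n i + m i)%Z) = int_comb n + int_comb m.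
Proof. unfold int_comb. rewrite <- rsum_plus. apply rsum_ext; intros; rewrite plus_IZR; ring. Qed.

Lemma int_comb_opp n : int_comb (fun i => (- n i)%Z) = - int_comb n.
Proof.
  unfold int_comb. replace (- _) with (-1 * rsum (fun i => IZR (n i) * nth i l 0) k) by ring.
  rewrite <- rsum_scal. apply rsum_ext; intros; rewrite opp_IZR; ring.
Qed.

Lemma int_comb_0 : int_comb (fun _ => 0%Z) = 0.
Proof. unfold int_comb. rewrite (rsum_ext _ (fun _ => 0)), rsum_0; auto. intros; simpl; ring. Qed.

Lemma int_comb_NoDup s : NoDup s -> (forall i, In i s -> (i < k)%nat) ->
  fold_right Rplus 0 (map (fun i => nth i l 0) s) = int_comb (memz s).
Proof.
  induction s as [|a s IH]; intros Hn Hb.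
  - rewrite (int_comb_ext _ (fun _ => 0%Z)), int_comb_0; auto.
  - inversion Hn as [|a' s' Ha Hs]; subst. simpl. rewrite IH by (auto; intros; apply Hb; simpl; auto).
    rewrite (int_comb_ext (memz (a :: s)) (fun i => (memz s i + if Nat.eq_dec i a then 1 else 0)%Z)).
    + assert (Hd : int_comb (fun i => if Nat.eq_dec i a then 1%Z else 0%Z) = nth a l 0).
      { unfold int_comb. rewrite (rsum_ext _ (fun i => if Nat.eq_dec i a then nth i l 0 else 0)).
        - apply rsum_delta, Hb; simpl; auto.
        - intros i _. destruct (Nat.eq_dec i a); simpl; ring. }
      rewrite int_comb_plus, Hd. lra.
    + intros i _. unfold memz, memb.
      destruct (Nat.eq_dec i a) as [->|ne];
      destruct (in_dec Nat.eq_dec _ s); destruct (in_dec Nat.eq_dec _ (a :: s)) as [B|B];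
      simpl in B; try tauto; try lia.
      destruct B; congruence.
Qed.

Lemma psum_int_comb sigma m : Permutation (seq 0 k) sigma ->
  psum l sigma m = int_comb (memz (firstn m sigma)).
Proof.
  intros P. destruct (Permutation_seq_iff k sigma P) as [Hn [Hi _]].
  apply int_comb_NoDup.
  - rewrite <- (firstn_skipn m sigma) in Hn. eapply NoDup_app_remove_r; eauto.
  - intros x Hx. apply Hi. eapply in_firstn; eauto.
Qed.

Lemma tedge_sym u v : tedge l u v -> tedge l v u.
Proof. intros [x [sigma [P H]]]. exists x, sigma. split; auto. intros y Hy. apply H. simpl in *; tauto. Qed.

Lemma tedge_eqC u v : (0 < k)%nat -> eqC u v -> tedge l u v.
Proof.
  intros Hk H. exists u, (seq 0 (length l)). split; [apply Permutation_refl|].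
  intros y Hy. exists 0%nat. split; [lia|]. unfold psum; simpl. rewrite Rplus_0_r.
  destruct Hy as [<-|[<-|[]]]; [apply eqC_refl| apply eqC_sym; auto].
Qed.

Hypothesis Hk : (2 <= k)%nat.

(* The rotation of [0, k) starting at [j] has [l_j] as first step. *)
Lemma tedge_plus j y : (j < k)%nat -> tedge l y (y + nth j l 0).
Proof.
  intros Hj. exists y, (seq j (k - j) ++ seq 0 j). split.
  { rewrite Hlen, <- (Nat.sub_add j k), Nat.add_comm, seq_app by lia. simpl.
    replace (j + (k - j))%nat with k by lia. apply Permutation_app_comm. }
  intros z Hz. destruct Hz as [<-|[<-|[]]].
  - exists 0%nat. split; [lia|]. unfold psum; simpl. rewrite Rplus_0_r; apply eqC_refl.
  - exists 1%nat. split; [lia|]. unfold psum. destruct (k - j)%nat eqn:E; [lia|].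
    simpl. rewrite Rplus_0_r. apply eqC_refl.
Qed.

Lemma tedge_minus j y : (j < k)%nat -> tedge l y (y - nth j l 0).
Proof.
  intros Hj. apply tedge_sym. replace y with (y - nth j l 0 + nth j l 0) at 2 by ring.
  apply tedge_plus; auto.
Qed.

Lemma in_component_plus_mult x0 j y z : (j < k)%nat ->
  in_component l x0 y -> in_component l x0 (y + IZR z * nth j l 0).
Proof.
  intros Hj Hy. induction z using Z.peano_ind.
  - rewrite Rmult_0_l, Rplus_0_r; auto.
  - eapply rt_trans; [apply IHz|]. apply rt_step.
    rewrite succ_IZR, Rmult_plus_distr_r, Rmult_1_l, <- Rplus_assoc. apply tedge_plus; auto.
  - eapply rt_trans; [apply IHz|]. apply rt_step.
    rewrite <- Z.sub_1_r, minus_IZR, Rmult_minus_distr_r, Rmult_1_l.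
    unfold Rminus. rewrite <- Rplus_assoc. apply tedge_minus; auto.
Qed.

Lemma in_component_iff x0 y : in_component l x0 y <-> exists n, eqC y (x0 + int_comb n).
Proof.
  split.
  - intros H. apply clos_rt_rtn1 in H. induction H as [|y z [x [sigma [P Hs]]] _ [n Hn]].
    + exists (fun _ => 0%Z). rewrite int_comb_0, Rplus_0_r. apply eqC_refl.
    + destruct (Hs y (or_introl eq_refl)) as [m1 [_ [b Hb]]].
      destruct (Hs z (or_intror (or_introl eq_refl))) as [m2 [_ [c Hc]]].
      rewrite Hlen in P. rewrite psum_int_comb in Hb, Hc by exact P.
      exists (fun i => (n i + (- memz (firstn m1 sigma) i + memz (firstn m2 sigma) i))%Z).
      rewrite !int_comb_plus, int_comb_opp.
      destruct Hn as [a Ha]. exists (c - b + a)%Z. rewrite plus_IZR, minus_IZR. lra.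
  - intros [n Hn].
    assert (H : forall j, (j <= k)%nat ->
              in_component l x0 (x0 + rsum (fun i => IZR (n i) * nth i l 0) j)).
    { induction j; intros Hj; simpl.
      - rewrite Rplus_0_r. apply rt_refl.
      - rewrite <- Rplus_assoc. apply in_component_plus_mult; [lia|]. apply IHj; lia. }
    eapply rt_trans; [apply (H k); lia|]. apply rt_step. apply tedge_eqC; [lia|].
    apply eqC_sym; auto.
Qed.

Hypothesis Hsum : fold_right Rplus 0 l = 1.
Hypothesis Hirr : forall p : list Z, length p = k ->
  (exists i, (i < k)%nat /\ nth i p 0%Z <> 0%Z) ->
  fold_right Rplus 0 (map (fun q => IZR (fst q) * snd q) (combine p l)) <> 0.

Lemma int_comb_const d : int_comb (fun _ => d) = IZR d.
Proof.
  unfold int_comb. rewrite rsum_scal, <- fold_right_Rplus_map_seq, <- Hlen, map_nth_seq_length, Hsum.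
  ring.
Qed.

Lemma int_comb_eq0 p : int_comb p = 0 -> forall i, (i < k)%nat -> p i = 0%Z.
Proof.
  intros Hp i Hi. destruct (Z.eq_dec (p i) 0) as [E|E]; auto. exfalso.
  apply (Hirr (map p (seq 0 k))).
  - rewrite length_map, length_seq; auto.
  - exists i; split; auto. rewrite nth_map_seq; auto.
  - rewrite <- (map_nth_seq_length l 0), Hlen, combine_map, map_map, fold_right_Rplus_map_seq.
    apply Hp.
Qed.

Lemma lattice_point_eq_iff n n' :
  lattice_point k n = lattice_point k n' <-> eqC (int_comb n) (int_comb n').
Proof.
  split.
  - intros H. destruct (lattice_point_shift_inv k ltac:(lia) n n' H) as [d Hd].
    exists d. rewrite (int_comb_ext n (fun i => (n' i + d)%Z)), int_comb_plus, int_comb_const by auto.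
    ring.
  - intros [m H]. apply (lattice_point_shift k n n' m). intros i Hi.
    assert (Hp : int_comb (fun i => (n i + (- n' i + - m))%Z) = 0).
    { rewrite !int_comb_plus, int_comb_opp, (int_comb_opp (fun _ => m)), int_comb_const. lra. }
    pose proof (int_comb_eq0 _ Hp i Hi). lia.
Qed.

Variable x0 : R.

(* Off the component the value is an arbitrary junk point of Λ. *)
Definition vertex_map (y : R) : list Z :=
  match excluded_middle_informative (exists n, eqC y (x0 + int_comb n)) with
  | left H => lattice_point k (proj1_sig (constructive_indefinite_description _ H))
  | right _ => lattice_point k (fun _ => 0%Z)
  end.

Lemma vertex_map_spec y n : eqC y (x0 + int_comb n) -> vertex_map y = lattice_point k n.
Proof.
  intros Hy. unfold vertex_map.
  destruct (excluded_middle_informative _) as [H|H]; [|exfalso; apply H; exists n; auto].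
  destruct (constructive_indefinite_description _ H) as [n' [a Ha]]; simpl.
  apply lattice_point_eq_iff. destruct Hy as [b Hb]. exists (b - a)%Z. rewrite minus_IZR. lra.
Qed.

Lemma vertex_map_eqC y y' : eqC y y' -> vertex_map y = vertex_map y'.
Proof.
  intros E. destruct (classic (exists n, eqC y (x0 + int_comb n))) as [[n Hn]|Hno].
  - rewrite (vertex_map_spec y n Hn), (vertex_map_spec y' n); auto.
    eapply eqC_trans; [apply eqC_sym, E| exact Hn].
  - unfold vertex_map. destruct (excluded_middle_informative _) as [H|H]; [contradiction|].
    destruct (excluded_middle_informative _) as [[n Hn]|H']; auto.
    exfalso. apply Hno. exists n. eapply eqC_trans; eauto.
Qed.

Lemma vertex_map_Lambda y : in_component l x0 y -> inLambda k (vertex_map y).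
Proof.
  intros Hy. apply in_component_iff in Hy. destruct Hy as [n Hn].
  rewrite (vertex_map_spec _ _ Hn). apply lattice_point_Lambda.
Qed.

Lemma vertex_map_onto z : inLambda k z -> exists y, in_component l x0 y /\ vertex_map y = z.
Proof.
  intros Hz. destruct (lattice_point_onto k ltac:(lia) z Hz) as [n Hn].
  exists (x0 + int_comb n). rewrite (vertex_map_spec _ n) by apply eqC_refl. split; auto.
  apply in_component_iff. exists n. apply eqC_refl.
Qed.

Lemma vertex_map_inj y y' : in_component l x0 y -> in_component l x0 y' ->
  vertex_map y = vertex_map y' -> eqC y y'.
Proof.
  rewrite !in_component_iff. intros [n Hn] [n' Hn'] E.
  rewrite (vertex_map_spec _ _ Hn), (vertex_map_spec _ _ Hn') in E.
  apply lattice_point_eq_iff in E.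
  destruct Hn as [a Ha], Hn' as [b Hb], E as [c Hc].
  exists (a + c - b)%Z. rewrite minus_IZR, plus_IZR. lra.
Qed.

Lemma Delta_vertex_eqC x n sigma m : eqC x (x0 + int_comb n) -> Permutation (seq 0 k) sigma ->
  eqC (x + psum l sigma m) (x0 + int_comb (fun i => (n i + memz (firstn m sigma) i)%Z)).
Proof.
  intros [a Ha] P. rewrite int_comb_plus, psum_int_comb by auto. exists a. lra.
Qed.

Lemma vertex_map_Delta x n sigma m : eqC x (x0 + int_comb n) -> Permutation (seq 0 k) sigma ->
  vertex_map (x + psum l sigma m) = vadd (vertex_map x) (aI k (bits k (firstn m sigma))).
Proof.
  intros Hx P. rewrite (vertex_map_spec _ _ (Delta_vertex_eqC x n sigma m Hx P)).
  rewrite (vertex_map_spec _ _ Hx). apply lattice_point_add_memz.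
Qed.

Lemma Delta_base_in_component x sigma y : Permutation (seq 0 k) sigma ->
  inDelta l x sigma y -> in_component l x0 y -> exists n, eqC x (x0 + int_comb n).
Proof.
  intros P [m [_ [a Ha]]] Hy. apply in_component_iff in Hy. destruct Hy as [n0 [b Hb]].
  rewrite psum_int_comb in Ha by auto.
  exists (fun i => (n0 i + - memz (firstn m sigma) i)%Z).
  rewrite int_comb_plus, int_comb_opp. exists (b - a)%Z. rewrite minus_IZR. lra.
Qed.

Lemma Dsimplex_nil : Dsimplex k [].
Proof.
  exists (lattice_point k (fun _ => 0%Z)), []. split; [apply lattice_point_Lambda|].
  split; [simpl; auto|]. intros v; simpl; split; [intros []|intros [I [[] _]]].
Qed.

(* The chain consists of the prefix sets of [sigma] at the steps [m] hit by [S]. *)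
Lemma Delta_subset_Dsimplex x n sigma S : eqC x (x0 + int_comb n) -> Permutation (seq 0 k) sigma ->
  (forall y, In y S -> inDelta l x sigma y) -> Dsimplex k (map vertex_map S).
Proof.
  intros Hx P HS.
  set (hit := fun m => if excluded_middle_informative
                         (exists y, In y S /\ eqC y (x + psum l sigma m)) then true else false).
  exists (vertex_map x), (map (fun m => bits k (firstn m sigma)) (filter hit (seq 0 k))).
  split; [rewrite (vertex_map_spec _ _ Hx); apply lattice_point_Lambda|].
  split; [apply chain_ok_prefixes; auto|].
  intros v. rewrite in_map_iff. split.
  - intros [y [<- Hy]]. destruct (HS y Hy) as [m [Hm Hym]]. rewrite Hlen in Hm.
    exists (bits k (firstn m sigma)). split.
    + apply (in_map (fun m => bits k (firstn m sigma))), filter_In. split; [apply in_seq; lia|].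
      unfold hit. destruct (excluded_middle_informative _) as [_|H]; auto.
      exfalso; apply H; exists y; auto.
    + rewrite (vertex_map_eqC _ _ Hym). apply (vertex_map_Delta x n); auto.
  - intros [I [HI ->]]. apply in_map_iff in HI. destruct HI as [m [<- Hm]].
    apply filter_In in Hm. destruct Hm as [_ Hm]. unfold hit in Hm.
    destruct (excluded_middle_informative _) as [[y [Hy E]]|_]; [|discriminate].
    exists y. split; auto. rewrite (vertex_map_eqC _ _ E). apply (vertex_map_Delta x n); auto.
Qed.

Lemma admissible_Dsimplex S : (forall y, In y S -> in_component l x0 y) ->
  admissible l S -> Dsimplex k (map vertex_map S).
Proof.
  intros HS [x [sigma [P HD]]]. rewrite Hlen in P.
  destruct S as [|y0 S']; [apply Dsimplex_nil|].
  destruct (Delta_base_in_component x sigma y0 P (HD y0 (or_introl eq_refl)) (HS y0 (or_introl eq_refl)))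
    as [n Hn].
  apply (Delta_subset_Dsimplex x n sigma); auto.
Qed.

Lemma Dsimplex_admissible S : (forall y, In y S -> in_component l x0 y) ->
  Dsimplex k (map vertex_map S) -> admissible l S.
Proof.
  intros HS [z [c [Hz [Hc Hv]]]].
  destruct (lattice_point_onto k ltac:(lia) z Hz) as [n Hn].
  destruct (chain_ok_prefixes_perm k c Hc) as [sigma [P Hsig]].
  assert (Hx : eqC (x0 + int_comb n) (x0 + int_comb n)) by apply eqC_refl.
  exists (x0 + int_comb n), sigma. split; [rewrite Hlen; auto|].
  intros y Hy. destruct (proj1 (Hv (vertex_map y)) (in_map _ _ _ Hy)) as [I [HI Efy]].
  destruct (Hsig I HI) as [m [Hm ->]].
  exists m. split; [lia|]. apply vertex_map_inj; auto.
  - apply in_component_iff. eexists. apply (Delta_vertex_eqC _ n sigma m Hx P).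
  - rewrite (vertex_map_Delta _ n sigma m Hx P), (vertex_map_spec _ n Hx), Hn. auto.
Qed.

End Tonnetz.

Theorem theorem6p5 (k : nat) (l : list R)
  (Hk : (2 <= k)%nat)
  (Hlen : length l = k)
  (Hpos : forall i, (i < k)%nat -> 0 < nth i l 0)
  (Hsum : fold_right Rplus 0 l = 1)
  (Hirr : forall p : list Z, length p = k ->
     (exists i, (i < k)%nat /\ nth i p 0%Z <> 0%Z) ->
     fold_right Rplus 0 (map (fun q => IZR (fst q) * snd q) (combine p l)) <> 0) :
  forall x0 : R, tonnetz_component_iso_Delone k l x0.
Proof.
  intros x0. exists (vertex_map k l x0). split; [|split; [|split; [|split]]].
  - apply vertex_map_eqC; auto.
  - apply vertex_map_Lambda; auto.
  - apply vertex_map_inj; auto.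
  - apply vertex_map_onto; auto.
  - intros S HS. split.
    + apply admissible_Dsimplex; auto.
    + apply Dsimplex_admissible; auto.
Qed.
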